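(* Let $m(\omega)$ be a positive-integer-valued random variable, and let $j_\omega=\min\{n\in\mathbb N: m(\theta^{-n}\omega)\le n\}$. Then for every integer $k\ge0$, $\mathbb P(j_\omega>k)\le\mathbb P(m(\omega)>k)$.
   Context: $(\Omega,\mathcal F,\mathbb P,\theta)$ is the shift system of a stationary sequence indexed by $\mathbb Z$; in particular $\theta$ is invertible and preserves $\mathbb P$. ($j_\omega$ is a.s. finite; $\{j_\omega>k\}$ is understood with $j_\omega=\infty$ if no such $n$ exists.) *)

From HB Require Import structures.
From mathcomp Require Import all_boot all_order all_algebra.
From mathcomp Require Import all_classical all_reals all_analysis.
Set Implicit Arguments. Unset Strict Implicit. Unset Printing Implicit Defensive.
Import Order.TTheory GRing.Theory Num.Theory.
Local Open Scope classical_set_scope.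

(* j_omega = min { n in N : m (theta^{-n} omega) <= n }, with j_omega = oo if
   no such n exists.  Hence j_omega > k  iff  for every n <= k,
   m (theta^{-n} omega) > n.  [j_gt m thinv k] is the event {j_omega > k},
   where thinv is the inverse shift theta^{-1}. *)
Definition j_gt (T : Type) (m : T -> nat) (thinv : T -> T) (k : nat) : set T :=
  [set w | forall n : nat, (n <= k)%N -> (n < m (iter n thinv w))%N].

From HB Require Import structures.
From mathcomp Require Import all_boot all_order all_algebra.
From mathcomp Require Import all_classical all_reals all_analysis.
Set Implicit Arguments. Unset Strict Implicit. Unset Printing Implicit Defensive.
Import Order.TTheory GRing.Theory Num.Theory.
Local Open Scope classical_set_scope.
Local Open Scope ring_scope.
Local Open Scope ereal_scope.

(* If [j w > k] then in particular [m (theta^{-k} w) > k], so the event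
   [{j > k}] is contained in the preimage of [{m > k}] under [theta^{-k}];
   since [theta^{-1}] preserves the measure as well as [theta], that
   preimage has the same probability as [{m > k}]. *)

Section inverse_preserves_measure.
Context d (T : measurableType d) (R : realType) (mu : {measure set T -> \bar R}).
Variables f g : T -> T.
Hypothesis mg : measurable_fun setT g.
Hypothesis fK : cancel f g.
Hypothesis f_preserves : forall A, measurable A -> mu (f @^-1` A) = mu A.

Lemma measurable_preimage_inv A : measurable A -> measurable (g @^-1` A).
Proof. by move=> mA; rewrite -[_ @^-1` _]setTI; apply: mg. Qed.

Lemma measurable_preimage_iter n A :
  measurable A -> measurable (iter n g @^-1` A).
Proof.
elim: n A => [//|n IHn] A mA.
by apply: (IHn (g @^-1` A)); apply: measurable_preimage_inv.
Qed.

Lemma measure_preimage_inv A : measurable A -> mu (g @^-1` A) = mu A.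
Proof.
move=> mA; rewrite -f_preserves; last exact: measurable_preimage_inv.
by congr (mu _); apply/funext => x /=; rewrite fK.
Qed.

Lemma measure_preimage_iter_inv n A :
  measurable A -> mu (iter n g @^-1` A) = mu A.
Proof.
elim: n A => [//|n IHn] A mA; rewrite -(measure_preimage_inv mA).
by apply: (IHn (g @^-1` A)); apply: measurable_preimage_inv.
Qed.

End inverse_preserves_measure.

Lemma measurable_ltn_preimage d (T : measurableType d) (m : T -> nat) n :
  (forall i, measurable (m @^-1` [set i])) -> measurable [set w | (n < m w)%N].
Proof.
move=> mm.
have -> : [set w | (n < m w)%N] = ~` \bigcup_(i in [set i | (i <= n)%N]) m @^-1` [set i].
  apply/seteqP; split => w /=.
    by move=> nm [i /= ?] mwi; move: nm; rewrite mwi ltnNge => /negP.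
  by rewrite ltnNge => nmw; apply/negP => mwn; apply: nmw; exists (m w).
by apply: measurableC; apply: bigcup_measurable.
Qed.

Lemma j_gt_bigcap (T : Type) (m : T -> nat) (thinv : T -> T) k :
  j_gt m thinv k =
  \bigcap_(n in [set n | (n <= k)%N]) iter n thinv @^-1` [set w | (n < m w)%N].
Proof. by []. Qed.

Lemma j_gt_sub_iter (T : Type) (m : T -> nat) (thinv : T -> T) k :
  j_gt m thinv k `<=` iter k thinv @^-1` [set w | (k < m w)%N].
Proof. by move=> w /(_ k (leqnn k)). Qed.

Theorem lemma5p2 (d : measure_display) (T : measurableType d) (R : realType)
  (P : probability T R) (theta thinv : T -> T)
  (htheta_meas : measurable_fun setT theta)
  (hthinv_meas : measurable_fun setT thinv)
  (hK1 : cancel theta thinv) (hK2 : cancel thinv theta)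
  (hpres : forall A : set T, measurable A -> P (theta @^-1` A) = P A)
  (m : T -> nat)
  (hm_meas : forall n : nat, measurable (m @^-1` [set n]))
  (hm_pos : forall w : T, (0 < m w)%N)
  (k : nat) :
  P (j_gt m thinv k) <= P [set w | (k < m w)%N].
Proof.
have mgt n : measurable [set w | (n < m w)%N] by exact: measurable_ltn_preimage.
rewrite -(measure_preimage_iter_inv hthinv_meas hK1 hpres k (mgt k)).
apply: le_measure; last exact: j_gt_sub_iter.
- rewrite inE j_gt_bigcap; apply: bigcap_measurable => [|n _].
    by exists 0%N.
  exact: measurable_preimage_iter.
- by rewrite inE; apply: measurable_preimage_iter.
Qed.
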